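(* Let $G=(V,E)$ be a connected $(n,d,\lambda)$ graph. Let $v_1,\dots,v_{t-1}$ ($t\ge2$) be vertices of $G$, let $B=\bigcup_{i=1}^{t-1}N[v_i]$ and $W=V\setminus B$, and suppose $|W|>\frac{\lambda}{d+\lambda}n$. Then there exists a vertex $u\in B$ such that \[ 1\le |N(u)\cap W|\le (d+\lambda)\frac{|W|}{n}+\lambda . \]
   Context: An $(n,d,\lambda)$ graph is an $n$-vertex $d$-regular graph whose adjacency matrix eigenvalues $\lambda_1\ge\dots\ge\lambda_n$ satisfy $|\lambda_i|\le\lambda$ for all $2\le i\le n$, where $\lambda\ge 0$. $N(v)$ is the set of neighbours of $v$ and $N[v]=N(v)\cup\{v\}$. (In the paper, $|N(u)\cap W|$ is called the type of $u$, and the sets arise as the black/white sets during a greedy construction of a Z-sequence.) *)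

From HB Require Import structures.
From mathcomp Require Import all_boot all_order all_algebra.
Set Implicit Arguments. Unset Strict Implicit. Unset Printing Implicit Defensive.
Import Order.TTheory GRing.Theory Num.Theory.
Local Open Scope ring_scope.

Definition simple_graph (T : finType) (e : rel T) : Prop :=
  symmetric e /\ irreflexive e.

Definition nbhd (T : finType) (e : rel T) (v : T) : {set T} := [set u | e v u].
Definition cnbhd (T : finType) (e : rel T) (v : T) : {set T} := v |: nbhd e v.

Definition regular (T : finType) (e : rel T) (d : nat) : Prop :=
  forall v : T, #|nbhd e v| = d.

Definition connected_graph (T : finType) (e : rel T) : Prop :=
  forall x y : T, connect e x y.

Definition adjmx (R : nzRingType) (T : finType) (e : rel T) : 'M[R]_#|T| :=
  \matrix_(i, j) (e (enum_val i) (enum_val j))%:R.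

(* (n,d,lambda) graph: d-regular, and the eigenvalues (roots of the
   characteristic polynomial of the adjacency matrix, with multiplicity)
   listed in non-increasing order l_1 >= ... >= l_n satisfy |l_i| <= lambda
   for 2 <= i <= n. *)
Definition ndl_graph (R : rcfType) (T : finType) (e : rel T) (d : nat) (lam : R)
  : Prop :=
  [/\ simple_graph e, regular e d, 0 <= lam &
    exists l : 'I_#|T| -> R,
      [/\ char_poly (adjmx R e) = \prod_(i < #|T|) ('X - (l i)%:P),
          (forall i j : 'I_#|T|, (i <= j)%N -> l j <= l i) &
          forall i : 'I_#|T|, (1 <= i)%N -> `|l i| <= lam]].

From HB Require Import structures.
From mathcomp Require Import all_boot all_order all_algebra.
From mathcomp Require Import sesquilinear spectral complex ring lra.
Set Implicit Arguments. Unset Strict Implicit. Unset Printing Implicit Defensive.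
Import Order.TTheory GRing.Theory Num.Theory.
Local Open Scope ring_scope.
Local Open Scope sesquilinear_scope.

(* Put om = |W|/n and f = 1_W - om.  Then f is orthogonal to the all-ones
   eigenvector of the adjacency matrix A, and (A f)(u) = |N(u) :&: W| - om d.
   As d is a simple eigenvalue and every other eigenvalue has modulus at most
   lam, the spectral theorem gives ||A f||^2 <= lam^2 ||f||^2 = lam^2 om |B|.
   By connectivity some u0 in B has a neighbour in W.  If K = (d + lam) om + lam
   is at least d, u0 itself works.  Otherwise, if every vertex of B had type 0
   or type > K, each would contribute at least lam^2 om to ||A f||^2 and u0
   strictly more, which contradicts the spectral bound. *)

Lemma prod_XsubC_card (F : fieldType) (I : finType) (a b : I -> F) (P : pred F) :
  \prod_i ('X - (a i)%:P) = \prod_i ('X - (b i)%:P) ->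
  #|[pred i | P (a i)]| = #|[pred i | P (b i)]|.
Proof.
have prod_map (c : I -> F) :
    \prod_i ('X - (c i)%:P) = \prod_(x <- map c (index_enum I)) ('X - x%:P).
  by rewrite big_map.
rewrite !prod_map => /prod_XsubC_eq /permP /(_ P).
by rewrite !count_map -!sum1_count !sum1_card.
Qed.

Lemma char_poly_similar (F : fieldType) n (P M : 'M[F]_n) :
  P \in unitmx -> char_poly (invmx P *m M *m P) = char_poly M.
Proof.
move=> Pu; rewrite /char_poly /char_poly_mx.
set Q := map_mx polyC P; set Qi := map_mx polyC (invmx P).
have QiQ : Qi *m Q = 1%:M by rewrite -map_mxM mulVmx // map_mx1.
have -> : 'X%:M - map_mx polyC (invmx P *m M *m P) =
          Qi *m ('X%:M - map_mx polyC M) *m Q.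
  rewrite mulmxBr mulmxBl !map_mxM -!mulmxA; congr (_ - _).
  by rewrite mul_scalar_mx -scalemxAr QiQ scalemx1.
by rewrite !det_mulmx mulrAC -det_mulmx QiQ det1 mul1r.
Qed.

Lemma char_poly_diag (R : comNzRingType) n (D : 'rV[R]_n) :
  char_poly (diag_mx D) = \prod_i ('X - (D 0 i)%:P).
Proof.
rewrite char_poly_trig ?diag_mx_is_trig //.
by apply: eq_bigr => i _; rewrite mxE eqxx mulr1n.
Qed.

Lemma char_poly_normalmx (C : numClosedFieldType) n (M : 'M[C]_n) :
  M \is normalmx -> char_poly M = \prod_i ('X - (spectral_diag M 0 i)%:P).
Proof.
move=> /orthomx_spectralP {1}->.
by rewrite char_poly_similar ?spectral_unit // char_poly_diag.
Qed.

Section NormalMatrix.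
Variable C : numClosedFieldType.

Lemma cV_dot_sqnorm n (g : 'cV[C]_n) : (g ^t* *m g) 0 0 = \sum_i `|g i 0| ^+ 2.
Proof. by rewrite !mxE; apply: eq_bigr => i _; rewrite !mxE normCKC. Qed.

Lemma unitary_trC_dot n (U : 'M[C]_n) (g h : 'cV[C]_n) :
  U \is unitarymx -> (U ^t* *m g) ^t* *m (U ^t* *m h) = g ^t* *m h.
Proof.
move=> /unitarymxP UU.
by rewrite trmx_mul map_mxM trmxCK mulmxA -(mulmxA _ U) UU mulmx1.
Qed.

Lemma diag_orth_contract n (D : 'rV[C]_n) (c lam : C) (y z : 'cV[C]_n) :
  0 <= lam -> lam < `|c| -> (#|[pred k | (lam < `|D 0 k|)%R]| <= 1)%N ->
  diag_mx D *m y = c *: y -> y != 0 -> (y ^t* *m z) 0 0 = 0 ->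
  \sum_k `|(diag_mx D *m z) k 0| ^+ 2 <= lam ^+ 2 * \sum_k `|z k 0| ^+ 2.
Proof.
move=> lam_ge0 lam_c /card_le1_eqP big_uniq Dy y_neq0 yz.
have y_supp k : y k 0 != 0 -> lam < `|D 0 k|.
  move=> yk; have /matrixP/(_ k 0) := Dy.
  by rewrite mul_diag_mx !mxE => /(mulIf yk) ->.
have /cV0Pn [k0 yk0] := y_neq0.
have big_k0 k : lam < `|D 0 k| -> k = k0.
  by move=> big_k; apply: big_uniq; rewrite inE //; apply: y_supp.
have y_eq0 k : k != k0 -> y k 0 = 0.
  by apply: contraNeq => /y_supp /big_k0 ->.
have zk0 : z k0 0 = 0.
  move: yz; rewrite mxE (bigD1 k0) //= big1 ?addr0 => [|k /y_eq0 yk].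
    by rewrite !mxE => /eqP; rewrite mulf_eq0 conjC_eq0 (negPf yk0) => /eqP.
  by rewrite !mxE yk conjC0 mul0r.
rewrite mulr_sumr; apply: ler_sum => k _.
rewrite mul_diag_mx mxE normrM exprMn.
have [->|kk0] := eqVneq k k0; first by rewrite zk0 normr0 expr0n !mulr0.
have Dk_le : `|D 0 k| <= lam.
  by rewrite real_leNgt ?ger0_real //; apply: contra kk0 => /big_k0 ->.
by rewrite ler_wpM2r ?exprn_ge0 // lerXn2r ?nnegrE.
Qed.

Lemma normalmx_orth_contract n (M : 'M[C]_n) (a : 'I_n -> C) (c lam : C)
    (v f : 'cV[C]_n) :
  M \is normalmx -> char_poly M = \prod_i ('X - (a i)%:P) ->
  0 <= lam -> lam < `|c| -> (#|[pred i | (lam < `|a i|)%R]| <= 1)%N ->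
  M *m v = c *: v -> v != 0 -> (v ^t* *m f) 0 0 = 0 ->
  \sum_i `|(M *m f) i 0| ^+ 2 <= lam ^+ 2 * \sum_i `|f i 0| ^+ 2.
Proof.
move=> Mnormal char_a lam_ge0 lam_c big_a Mv v_neq0 vf.
set P := spectralmx M; set D := spectral_diag M.
have Pu : P \is unitarymx := spectral_unitarymx M.
have P_trC_unitary : P ^t* \is unitarymx by rewrite trmxC_unitary.
have PK (g : 'cV[C]_n) : P ^t* *m (P *m g) = g.
  by rewrite -invmx_unitary // mulKmx // spectral_unit.
have M_eq : M = P ^t* *m diag_mx D *m P.
  by rewrite -invmx_unitary //; apply/orthomx_spectralP.
have big_D : (#|[pred k | (lam < `|D 0 k|)%R]| <= 1)%N.
  have char_D := esym (char_poly_normalmx Mnormal).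
  by rewrite (prod_XsubC_card (fun x => lam < `|x|) (etrans char_D char_a)).
set y := P *m v; set z := P *m f.
have Dy : diag_mx D *m y = c *: y.
  have PM : P *m M = diag_mx D *m P by rewrite M_eq !mulmxA (unitarymxP Pu) mul1mx.
  by rewrite /y mulmxA -PM -mulmxA Mv scalemxAr.
have y_neq0 : y != 0 by apply: contraNneq v_neq0 => y0; rewrite -(PK v) -/y y0 mulmx0.
have yz : (y ^t* *m z) 0 0 = 0.
  by rewrite /y /z -[P]trmxCK unitary_trC_dot.
have Mf : M *m f = P ^t* *m (diag_mx D *m z) by rewrite M_eq /z !mulmxA.
rewrite Mf -!cV_dot_sqnorm unitary_trC_dot // -(PK f) -/z unitary_trC_dot //.
rewrite !cV_dot_sqnorm.
exact: diag_orth_contract Dy y_neq0 yz.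
Qed.
End NormalMatrix.

Section Adjacency.
Variables (T : finType) (e : rel T).

Lemma sum_enum_val (R : nmodType) (F : T -> R) :
  \sum_(i < #|T|) F (enum_val i) = \sum_u F u.
Proof. by rewrite -big_enum_val. Qed.

Lemma sumr_indicator (R : nzSemiRingType) (P : pred T) (B : {set T}) :
  \sum_(v | P v) ((v \in B)%:R : R) = #|[set v | P v & v \in B]|%:R.
Proof.
rewrite -natr_sum (eq_bigr (fun v => if v \in B then 1 else 0)%N); last first.
  by move=> v _; case: (v \in B).
by rewrite -big_mkcondr sum1dep_card.
Qed.

Lemma map_adjmx (R S : nzRingType) (f : {rmorphism R -> S}) :
  map_mx f (adjmx R e) = adjmx S e.
Proof. by apply/matrixP => i j; rewrite !mxE rmorph_nat. Qed.

Lemma adjmx_normal (C : numClosedFieldType) : symmetric e -> adjmx C e \is normalmx.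
Proof.
move=> e_sym; apply/normalmxP.
suff -> : (adjmx C e) ^t* = adjmx C e by [].
by apply/matrixP => i j; rewrite !mxE conjC_nat e_sym.
Qed.

Lemma adjmx_mul_col (R : nzRingType) (g : T -> R) i :
  (adjmx R e *m \col_j g (enum_val j)) i 0 = \sum_(v in nbhd e (enum_val i)) g v.
Proof.
rewrite mxE; under eq_bigr do rewrite !mxE.
rewrite (sum_enum_val (fun v => (e (enum_val i) v)%:R * g v)) [RHS]big_mkcond.
by apply: eq_bigr => v _; rewrite inE; case: (e _ v); rewrite ?mul1r ?mul0r.
Qed.

End Adjacency.

Section NdlGraph.
Variables (R : rcfType) (T : finType) (e : rel T) (d : nat) (lam : R).
Local Open Scope complex_scope.

Lemma normc_real (x : R) : `|x%:C| = `|x|%:C.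
Proof. by rewrite normc_def /= expr0n /= addr0 sqrtr_sqr. Qed.

Lemma ndl_adjmx_orth_contract (f : 'cV[R]_#|T|) :
  ndl_graph e d lam -> lam < d%:R -> \sum_i f i 0 = 0 ->
  \sum_i (adjmx R e *m f) i 0 ^+ 2 <= lam ^+ 2 * \sum_i f i 0 ^+ 2.
Proof.
move=> [[e_sym _] reg lam_ge0 [l [char_l _ l_bound]]] lam_d f_sum.
have [n0|n_gt0] := posnP #|T|.
  by rewrite !big1 ?mulr0 // => i; have := ltn_ord i; rewrite {2}n0.
pose one : 'cV[R[i]]_#|T| := const_mx 1.
have one_neq0 : one != 0.
  by apply/cV0Pn; exists (Ordinal n_gt0); rewrite mxE oner_eq0.
have A_one : adjmx R[i] e *m one = d%:R *: one.
  have -> : one = \col_j (fun=> 1) (enum_val j) by apply/matrixP => i j; rewrite !mxE.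
  apply/matrixP => i j; rewrite ord1 [LHS](adjmx_mul_col e (fun=> 1)) !mxE mulr1.
  by rewrite sumr_const -(reg (enum_val i)).
(* The spectral theorem needs an algebraically closed field: work in R[i]. *)
have char_C : char_poly (adjmx R[i] e) = \prod_i ('X - (l i)%:C%:P).
  by rewrite -(map_adjmx e (real_complex R)) -map_char_poly char_l map_prod_XsubC.
have big_l : (#|[pred i | (lam%:C < `|(l i)%:C|)%R]| <= 1)%N.
  apply/card_le1_eqP => i j; rewrite !inE !normc_real !ltcR.
  have l_top k : lam < `|l k| -> val k = 0%N.
    by case: (posnP k) => // /l_bound lk /(le_lt_trans lk); rewrite ltxx.
  by move=> /l_top li /l_top lj; apply: val_inj; rewrite /= li lj.
have one_f : (one ^t* *m map_mx (real_complex R) f) 0 0 = 0.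
  rewrite mxE; under eq_bigr do rewrite !mxE conjC1 mul1r.
  by rewrite -rmorph_sum f_sum.
have := normalmx_orth_contract (adjmx_normal _ e_sym) char_C _ _ big_l A_one one_neq0 one_f.
rewrite ler0c normr_nat -(rmorph_nat (real_complex R)) ltcR => /(_ lam_ge0 lam_d).
rewrite -(map_adjmx e (real_complex R)) -map_mxM.
under eq_bigr do rewrite mxE normc_real -rmorphXn real_normK ?num_real //.
under [X in _ <= _ * X]eq_bigr do rewrite mxE normc_real -rmorphXn real_normK ?num_real //.
by rewrite -!rmorph_sum -rmorphXn -rmorphM lecR.
Qed.

End NdlGraph.

Definition density (R : numFieldType) (T : finType) (S : {set T}) : R :=
  #|S|%:R / #|T|%:R.

Lemma density_ge0 (R : numFieldType) (T : finType) (S : {set T}) :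
  0 <= density R S.
Proof. by rewrite divr_ge0 ?ler0n. Qed.

Section TypeDeviation.
Variables (R : rcfType) (T : finType) (e : rel T) (d : nat) (lam : R).

Lemma ndl_type_deviation_le (S : {set T}) :
  ndl_graph e d lam -> lam < d%:R ->
  \sum_u (#|nbhd e u :&: S|%:R - density R S * d%:R) ^+ 2 <=
    lam ^+ 2 * density R S * #|~: S|%:R.
Proof.
move=> ndl lam_d; set om := density R S; have [_ reg _ _] := ndl.
have om_n : om * #|T|%:R = #|S|%:R.
  have [n0|n_gt0] := posnP #|T|; last by rewrite mulfVK // pnatr_eq0 -lt0n.
  by move: (max_card S); rewrite n0 leqn0 mulr0 => /eqP ->.
pose ind u : R := (u \in S)%:R - om.
have ind_sum : \sum_u ind u = 0.
  rewrite sumrB sumr_indicator cardsE -(sum_enum_val (fun=> om)) sumr_const card_ord.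
  by rewrite -[om *+ _]mulr_natr om_n subrr.
have ind_sqr u : ind u ^+ 2 = (1 - om) * (u \in S)%:R - om * ind u.
  by rewrite /ind; case: (u \in S) => /=; ring.
pose f : 'cV[R]_#|T| := \col_j ind (enum_val j).
have f_sum : \sum_i f i 0 = 0.
  by under eq_bigr do rewrite mxE; rewrite (sum_enum_val ind).
have f_sqnorm : \sum_i f i 0 ^+ 2 = om * #|~: S|%:R.
  under eq_bigr do rewrite mxE; rewrite (sum_enum_val (fun u => ind u ^+ 2)).
  under eq_bigr do rewrite ind_sqr.
  rewrite sumrB -!mulr_sumr ind_sum sumr_indicator cardsE mulr0 subr0.
  move: om_n; rewrite -(cardsC S) natrD mulrDr => om_n.
  by rewrite mulrBl mul1r -{1}om_n; ring.
have Af i : (adjmx R e *m f) i 0 = #|nbhd e (enum_val i) :&: S|%:R - om * d%:R.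
  rewrite adjmx_mul_col sumrB sumr_indicator sumr_const -(reg (enum_val i)).
  by rewrite mulr_natr.
have := ndl_adjmx_orth_contract ndl lam_d f_sum.
rewrite f_sqnorm mulrA; under eq_bigr do rewrite Af.
by rewrite (sum_enum_val (fun u => (#|nbhd e u :&: S|%:R - om * d%:R) ^+ 2)).
Qed.

End TypeDeviation.

Lemma sqr_dev_gt (F : realFieldType) (d l om a : F) : 0 <= l -> 0 <= om ->
  (d + l) * om + l < a -> l ^+ 2 * om < (a - om * d) ^+ 2.
Proof.
move=> l_ge0 om_ge0 a_large.
have l_lt : l * (1 + om) < a - om * d by lra.
have lhs_ge0 : 0 <= l * (1 + om) by nra.
have sqr_lt : (l * (1 + om)) ^+ 2 < (a - om * d) ^+ 2 by nra.
nra.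
Qed.

Lemma sqr_dev0_ge (F : realFieldType) (d l om : F) : 0 <= l -> 0 <= om ->
  l < (d + l) * om -> (d + l) * om + l < d -> l ^+ 2 * om <= (om * d) ^+ 2.
Proof.
move=> l_ge0 om_ge0 om_large K_lt_d.
have dl_gt0 : 0 < d + l by lra.
have q_ge0 : 0 <= (d - 2 * l) * (d + l) + l ^+ 2.
  by rewrite addr_ge0 ?sqr_ge0 // mulr_ge0 //; lra.
have l_d2 : l ^+ 2 * (d + l) <= l * d ^+ 2 by have := mulr_ge0 l_ge0 q_ge0; nra.
have om_d2 : l * d ^+ 2 <= (d + l) * om * d ^+ 2 by rewrite ler_wpM2r ?sqr_ge0 ?ltW.
have l2 : l ^+ 2 <= om * d ^+ 2 by rewrite -(ler_pM2r dl_gt0); nra.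
nra.
Qed.

Lemma connected_boundary_vertex (T : finType) (e : rel T) (B : {set T}) x y :
  connected_graph e -> x \in B -> y \notin B ->
  exists2 u, u \in B & (1 <= #|nbhd e u :&: ~: B|)%N.
Proof.
move=> /(_ x y) /connectP [p + ->] {y}.
elim: p x => [|z p IHp] x /= => [_ xB|/andP [e_xz path_zp] xB yB]; first by rewrite xB.
have [zB|zNB] := boolP (z \in B); first exact: IHp z path_zp zB yB.
by exists x => //; apply/card_gt0P; exists z; rewrite !inE e_xz.
Qed.

Lemma ndl_small_type_vertex (R : rcfType) (T : finType) (e : rel T) (d : nat)
    (lam : R) (B : {set T}) u0 :
  ndl_graph e d lam ->
  lam < (d%:R + lam) * density R (~: B) ->
  (d%:R + lam) * density R (~: B) + lam < d%:R ->
  u0 \in B -> (1 <= #|nbhd e u0 :&: ~: B|)%N ->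
  exists2 u, u \in B & (1 <= #|nbhd e u :&: ~: B|)%N /\
    #|nbhd e u :&: ~: B|%:R <= (d%:R + lam) * density R (~: B) + lam.
Proof.
move=> ndl lam_small K_lt_d u0B u0_pos; have [_ _ lam_ge0 _] := ndl.
set om := density R (~: B) in lam_small K_lt_d *.
set K := _ + lam in K_lt_d *.
set type := fun u => #|nbhd e u :&: ~: B|.
have om_ge0 : 0 <= om := density_ge0 R (~: B).
have lam_d : lam < d%:R by move: K_lt_d; rewrite /K; lra.
case: (pickP [pred u | [&& u \in B, (0 < type u)%N & (type u)%:R <= K]]).
  by move=> u /and3P [uB u_pos u_small]; exists u.
move=> no_small; exfalso.
pose dev u := ((type u)%:R - om * d%:R) ^+ 2.
have dev_gt u : u \in B -> (0 < type u)%N -> lam ^+ 2 * om < dev u.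
  move=> uB u_pos; apply: sqr_dev_gt => //.
  by have := no_small u; rewrite /= uB u_pos /= => /negbT; rewrite -ltNge.
have dev_ge u : u \in B -> lam ^+ 2 * om <= dev u.
  move=> uB; have [type0|/(dev_gt _ uB)/ltW //] := posnP (type u).
  by rewrite /dev type0 sub0r sqrrN sqr_dev0_ge.
have := ndl_type_deviation_le (~: B) ndl lam_d; rewrite setCK -/om; apply/negP; rewrite -ltNge.
rewrite (bigID (mem B)) /=.
apply: (@lt_le_trans _ _ (\sum_(u in B) dev u)); last first.
  by rewrite lerDl; apply: sumr_ge0 => u _; apply: sqr_ge0.
rewrite [X in X < _]mulr_natr -sumr_const (bigD1 u0) //= [X in _ < X](bigD1 u0) //=.
by apply: ltr_leD (dev_gt _ u0B u0_pos) _; apply: ler_sum => u /andP [uB _]; apply: dev_ge.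
Qed.

Theorem mainTheorem4 (R : rcfType) (T : finType) (e : rel T) (d : nat) (lam : R)
  (t : nat) (vs : 'I_t.-1 -> T) :
  ndl_graph e d lam -> connected_graph e -> (2 <= t)%N ->
  let B := \bigcup_(i < t.-1) cnbhd e (vs i) in
  let W := ~: B in
  lam / (d%:R + lam) * #|T|%:R < #|W|%:R ->
  exists2 u, u \in B &
    (1 <= #|nbhd e u :&: W|)%N /\
    #|nbhd e u :&: W|%:R <= (d%:R + lam) * (#|W|%:R / #|T|%:R) + lam.
Proof.
move=> ndl conn t_ge2 B W W_large; have [_ reg lam_ge0 _] := ndl.
have t1 : (0 < t.-1)%N by rewrite -ltnS prednK // ltnW.
have vs_B : vs (Ordinal t1) \in B.
  by apply/bigcupP; exists (Ordinal t1); rewrite // setU11.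
have [y yW] : exists y, y \in W.
  apply/card_gt0P; rewrite -(ltr0n R); apply: le_lt_trans W_large.
  by rewrite mulr_ge0 ?divr_ge0 ?addr_ge0 ?ler0n.
have yNB : y \notin B by rewrite -in_setC.
have [u0 u0B u0_pos] := connected_boundary_vertex conn vs_B yNB.
rewrite -/(density R W).
have [K_ge_d|K_lt_d] := leP d%:R ((d%:R + lam) * density R W + lam).
  exists u0 => //; split => //; apply: le_trans K_ge_d.
  by rewrite ler_nat -(reg u0) subset_leq_card // subsetIl.
have dl_gt0 : 0 < d%:R + lam.
  by have := mulr_ge0 (addr_ge0 (ler0n R d) lam_ge0) (density_ge0 R W); lra.
apply: ndl_small_type_vertex ndl _ K_lt_d u0B u0_pos.
have n_gt0 : (0 : R) < #|T|%:R by rewrite ltr0n; apply/card_gt0P; exists y.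
move: W_large; rewrite mulrAC ltr_pdivrMr // /density mulrA ltr_pdivlMr //.
by rewrite [(_ + _) * _]mulrC.
Qed.
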